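(* Under the hypotheses of Theorem 7.3 (positive integers $a,d,r,h,n$, $r\geq2$, $\gcd(a,d)=\gcd(a,r)=1$, $d>hn(r-1)$, $a_0=a$, $a_{k+1}=ha+r^kd$ for $0\leq k\leq n$, $\{a_0,\dots,a_{n+1}\}$ minimally generating $\mathfrak{S}_{n+2}$), let $\ell_0=0$, let $\ell_i$ ($1\leq i\leq a-1$) be the digit sum of the $r$-adic representation of $i$ up to order $n$, and $L=\max\{\ell_i\mid 1\leq i\leq a-1\}$. Let $M=\mathfrak{S}_{n+2}\setminus\{0\}$ and let $\omega_{s,t}$ be the Apéry table entries defined in the context. Then for $0\leq t\leq a-1$ and $0\leq s\leq L$: $$\omega_{s,t}=\begin{cases}\ell_tha+td & \text{if } 0\leq s\leq\ell_t,\\ \ell_tha+td+(s-\ell_t)a & \text{if } \ell_t<s\leq L.\end{cases}$$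
   Context: The $r$-adic representation of $i$ up to order $n$ is the unique expression $i=\sum_{k=0}^{n}\alpha_kr^k$ with nonnegative integers $\alpha_k$, $0\leq\alpha_k\leq r-1$ for $k\leq n-1$ and $\alpha_n$ unrestricted. For $n\geq1$, $nM=M+\cdots+M$ ($n$ copies). Apéry table entries: $\omega_{0,t}$ is the element of $\mathrm{Ap}(\mathfrak{S}_{n+2},a)$ congruent to $td$ modulo $a$ ($\omega_{0,0}=0$), and for $s\geq1$, $\omega_{s,t}$ is the smallest element of $sM$ congruent to $td$ modulo $a$. *)

From mathcomp Require Import all_boot.
Set Implicit Arguments. Unset Strict Implicit. Unset Printing Implicit Defensive.

Definition gen (a d r h : nat) (n : nat) (k : 'I_n.+2) : nat :=
  if val k == 0 then a else h * a + r ^ (val k).-1 * d.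

Definition in_span (n : nat) (g : 'I_n.+2 -> nat) (P : pred 'I_n.+2) (x : nat) : Prop :=
  exists c : 'I_n.+2 -> nat, x = \sum_(k < n.+2 | P k) c k * g k.

Arguments gen : clear implicits.

Definition inS (n : nat) (g : 'I_n.+2 -> nat) (x : nat) : Prop := in_span g predT x.

Definition minimally_generating (n : nat) (g : 'I_n.+2 -> nat) : Prop :=
  forall j : 'I_n.+2, ~ in_span g (predC1 j) (g j).

Definition inApery (n : nat) (g : 'I_n.+2 -> nat) (a x : nat) : Prop :=
  inS g x /\ ~ (a <= x /\ inS g (x - a)).

Definition in_sM (n : nat) (g : 'I_n.+2 -> nat) (s x : nat) : Prop :=
  exists f : nat -> nat,
    (forall j, j < s -> inS g (f j) /\ 0 < f j) /\ x = \sum_(j < s) f j.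

Definition is_omega (n : nat) (g : 'I_n.+2 -> nat) (a d s t v : nat) : Prop :=
  if s == 0 then inApery g a v /\ v = t * d %[mod a]
  else [/\ in_sM g s v, v = t * d %[mod a] &
          forall w, in_sM g s w -> w = t * d %[mod a] -> v <= w].

Definition radic_digit_sum (r n i : nat) : nat :=
  \sum_(k < n) (i %/ r ^ k %% r) + i %/ r ^ n.

Definition ell (r n i : nat) : nat := if i == 0 then 0 else radic_digit_sum r n i.

Definition Lmax (a r n : nat) : nat := \max_(1 <= i < a) ell r n i.

From mathcomp Require Import all_boot zify.
Set Implicit Arguments. Unset Strict Implicit. Unset Printing Implicit Defensive.

(* Every element of S is m a + \sum_i b_i (h a + r^i d) = (m + B h) a + T d with
   B = \sum_i b_i and T = \sum_i b_i r^i, and it lies in sM exactly when it can be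
   written with at least s generator occurrences, m + B >= s.  The claimed value
   of omega_{s,t} is the representation taking b = the r-adic digits of t (so
   T = t and B = ell_t) and m = s - ell_t; it is in sM and congruent to t d.
   Minimality: if such a combination is congruent to t d modulo a, then, as
   gcd(a, d) = 1, T = t mod a.  Either T = t, and then B >= ell_t because the
   r-adic digits minimise the coefficient sum of a representation of t; or
   T >= a + t, and the extra a d in T d dominates, since ell_t <= n (r - 1) + B
   and d > h n (r - 1). *)

Section Sumsets.
Variables (n : nat) (g : 'I_n.+2 -> nat).

Lemma inS_add x y : inS g x -> inS g y -> inS g (x + y).
Proof.
move=> [c ->] [c' ->]; exists (fun k => c k + c' k).
by rewrite -big_split; apply: eq_bigr => k _; rewrite mulnDl.
Qed.

Lemma inS_gen k : inS g (g k).
Proof.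
exists (fun j => j == k); rewrite (bigD1 k) //= eqxx mul1n big1 ?addn0 //.
by move=> j /negbTE ->.
Qed.

Lemma in_sM_add s s' x y : in_sM g s x -> in_sM g s' y -> in_sM g (s + s') (x + y).
Proof.
move=> [f [fM ->]] [f' [f'M ->]].
exists (fun j => if j < s then f j else f' (j - s)); split.
  by move=> j js; case: ifP => jl; [apply: fM | apply: f'M; lia].
rewrite big_split_ord; congr (_ + _); apply: eq_bigr => i _ /=.
  by rewrite ltn_ord.
by rewrite ltnNge leq_addr /= addKn.
Qed.

(* Merging the last two summands: (s+2)M is contained in (s+1)M. *)
Lemma in_sM_merge s x : in_sM g s.+2 x -> in_sM g s.+1 x.
Proof.
move=> [f [fM ->]].
exists (fun j => if j == s then f s + f s.+1 else f j); split.
  move=> j js; case: eqP => [_|_]; last by apply: fM; lia.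
  have [Ss pos_s] := fM s (leqnSn _); have [SS pos_S] := fM s.+1 (ltnSn _).
  by split; [exact: inS_add | lia].
rewrite !big_ord_recr /= eqxx addnA.
by congr (_ + _ + _); apply: eq_bigr => i _; rewrite (ltn_eqF (ltn_ord i)).
Qed.

Lemma in_sM_le N s x : in_sM g N x -> 0 < s <= N -> in_sM g s x.
Proof.
elim: N x => [|[|N] IH] x xN /andP[s_gt0 sN]; first by exfalso; lia.
  by have -> : s = 1 by lia.
case: (ltngtP s N.+2) sN => [sN _|//|-> //].
by apply: IH; [exact: in_sM_merge | rewrite s_gt0].
Qed.

Lemma in_sM_comb (c : 'I_n.+2 -> nat) :
  (forall k, 0 < g k) -> in_sM g (\sum_k c k) (\sum_k c k * g k).
Proof.
move=> g_gt0; apply: (big_ind2 (fun N x => in_sM g N x)).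
- by exists (fun _ => 0); split => //; rewrite big_ord0.
- by move=> *; exact: in_sM_add.
move=> k _; exists (fun _ => g k); split; first by split; [exact: inS_gen|].
by rewrite big_const_ord iter_addn_0 mulnC.
Qed.

Lemma comb_count_gt0 (c : 'I_n.+2 -> nat) :
  0 < \sum_k c k * g k -> 0 < \sum_k c k.
Proof.
case: (pickP (fun k => 0 < c k)) => [k ck _|c0].
  by rewrite (bigD1 k) //= ltn_addr.
by rewrite big1 // => k _; move: (c0 k); rewrite /= lt0n => /negbFE/eqP ->.
Qed.

Lemma in_sM_count s x : in_sM g s x ->
  exists c : 'I_n.+2 -> nat, x = \sum_k c k * g k /\ s <= \sum_k c k.
Proof.
elim: s x => [|s IH] x [f [fM ->]].
  by exists (fun _ => 0); rewrite big_ord0 big1.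
have [|c [Ec Cc]] := IH (\sum_(j < s) f j).
  by exists f; split => // j js; apply: fM; lia.
have [[c' Ec'] fs_gt0] := fM s (ltnSn s).
exists (fun k => c k + c' k); split.
  rewrite big_ord_recr /= Ec Ec' -big_split.
  by apply: eq_bigr => k _; rewrite mulnDl.
rewrite big_split -addn1 leq_add //.
by apply: comb_count_gt0; rewrite -Ec'.
Qed.

End Sumsets.

Definition gen_comb (a d r h n m : nat) (b : nat -> nat) : nat :=
  m * a + \sum_(i < n.+1) b i * (h * a + r ^ i * d).

Section Generators.
Variables a d r h n : nat.
Local Notation g := (gen a d r h n).

Lemma gen_gt0 k : 0 < a -> 0 < h -> 0 < g k.
Proof. by move=> a_gt0 h_gt0; rewrite /gen; case: ifP => _; lia. Qed.

Lemma gen_comb_of_coeffs (c : 'I_n.+2 -> nat) : exists m (b : nat -> nat),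
  \sum_k c k * g k = gen_comb a d r h n m b /\ \sum_k c k = m + \sum_(i < n.+1) b i.
Proof.
have lift0 (i : 'I_n.+1) : lift ord0 i = inord i.+1.
  by apply: val_inj; rewrite /= inordK // ltnS.
have gen_lift (i : 'I_n.+1) : g (lift ord0 i) = h * a + r ^ i * d.
  by rewrite /gen /=.
exists (c ord0), (fun i => c (inord i.+1)).
rewrite /gen_comb; split; rewrite [LHS]big_ord_recl /=; congr (_ + _);
  by apply: eq_bigr => i _; rewrite ?gen_lift lift0.
Qed.

Lemma coeffs_of_gen_comb m (b : nat -> nat) : exists c : 'I_n.+2 -> nat,
  \sum_k c k * g k = gen_comb a d r h n m b /\ \sum_k c k = m + \sum_(i < n.+1) b i.
Proof.
exists (fun k : 'I_n.+2 => if val k == 0 then m else b (val k).-1).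
by rewrite /gen_comb; split; rewrite [LHS]big_ord_recl.
Qed.

Lemma gen_combE m (b : nat -> nat) : gen_comb a d r h n m b =
  (m + (\sum_(i < n.+1) b i) * h) * a + (\sum_(i < n.+1) b i * r ^ i) * d.
Proof.
rewrite /gen_comb mulnDl -addnA; congr (_ + _).
by rewrite !big_distrl -big_split; apply: eq_bigr => i _; rewrite mulnDr !mulnA.
Qed.

End Generators.

Definition digit (r n t k : nat) : nat := if k < n then t %/ r ^ k %% r else t %/ r ^ n.

Section Digits.
Variable r : nat.
Hypothesis r_gt0 : 0 < r.

Lemma digit_sumE n t : \sum_(k < n.+1) digit r n t k = radic_digit_sum r n t.
Proof.
rewrite big_ord_recr /= /digit ltnn; congr (_ + _).
by apply: eq_bigr => k _; rewrite ltn_ord.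
Qed.

Lemma digit0 n t : digit r n.+1 t 0 = t %% r.
Proof. by rewrite /digit expn0 divn1. Qed.

Lemma digitS n t k : digit r n.+1 t k.+1 = digit r n (t %/ r) k.
Proof. by rewrite /digit ltnS !expnS !divnMA. Qed.

Lemma radic_digit_sumS n t :
  radic_digit_sum r n.+1 t = t %% r + radic_digit_sum r n (t %/ r).
Proof.
rewrite -!digit_sumE big_ord_recl digit0; congr (_ + _).
by apply: eq_bigr => k _; rewrite /= digitS.
Qed.

Lemma digit_valueE n t : \sum_(k < n.+1) digit r n t k * r ^ k = t.
Proof.
elim: n t => [|n IH] t; first by rewrite big_ord1 /digit expn0 divn1 muln1.
rewrite big_ord_recl digit0 expn0 muln1 {3}(divn_eq t r) addnC; congr (_ + _).
under eq_bigr => k _ do rewrite /= digitS expnS mulnCA.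
by rewrite -big_distrr IH mulnC.
Qed.

Lemma radic_digit_sum_min n (b : nat -> nat) :
  radic_digit_sum r n (\sum_(k < n.+1) b k * r ^ k) <= \sum_(k < n.+1) b k.
Proof.
elim: n b => [|n IH] b.
  by rewrite !big_ord1 /radic_digit_sum big_ord0 expn0 muln1 divn1.
set u := b 0 %/ r; set b' := fun k => if k is 0 then b 1 + u else b k.+1.
set Y := \sum_(k < n.+1) b k.+1 * r ^ k.
have b'_value : \sum_(k < n.+1) b' k * r ^ k = u + Y.
  by rewrite /Y !big_ord_recl /= !expn0 !muln1 addnA [u + _]addnC.
have b'_sum : \sum_(k < n.+1) b' k = u + \sum_(k < n.+1) b k.+1.
  by rewrite !big_ord_recl /= addnA [u + _]addnC.
have b_value : \sum_(k < n.+2) b k * r ^ k = (\sum_(k < n.+1) b' k * r ^ k) * r + b 0 %% r.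
  have Y_shift : \sum_(k < n.+1) b (lift ord0 k) * r ^ lift ord0 k = Y * r.
    by rewrite /Y big_distrl; apply: eq_bigr => k _; rewrite /= expnSr mulnA.
  rewrite b'_value big_ord_recl expn0 muln1 Y_shift.
  by move: (divn_eq (b 0) r); rewrite -/u /=; lia.
have b_sum : \sum_(k < n.+2) b k = b 0 + \sum_(k < n.+1) b k.+1 by rewrite big_ord_recl.
rewrite b_value radic_digit_sumS modnMDl modn_mod divnMDl // divn_small ?ltn_pmod //.
have := IH b'; rewrite addn0 b'_sum b_sum.
have : u <= u * r by rewrite leq_pmulr.
by move: (divn_eq (b 0) r); rewrite -/u; lia.
Qed.

(* Each of the first n digits is at most r - 1. *)
Lemma radic_digit_sum_le n t : radic_digit_sum r n t <= n * (r - 1) + t %/ r ^ n.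
Proof.
rewrite leq_add2r -[n in n * _]card_ord -sum_nat_const; apply: leq_sum => k _.
by have := ltn_pmod (t %/ r ^ k) r_gt0; lia.
Qed.

End Digits.

Lemma eqn_modMr_coprime a d x y : coprime a d -> x * d = y * d %[mod a] -> x = y %[mod a].
Proof.
move=> cad; wlog yx : x y / y <= x => [wlog_yx|].
  by case: (leqP y x) => [/wlog_yx//| /ltnW xy xyd]; symmetry; apply: wlog_yx.
move/eqP; rewrite eqn_mod_dvd ?leq_mul2r ?yx ?orbT //.
by rewrite -mulnBl Gauss_dvdl // -eqn_mod_dvd // => /eqP.
Qed.

(* Counting bound: replacing a representation with s <= m + B occurrences, of
   which B carry weight h, by s - L unit and L weight-h occurrences (L <= B + e)
   costs at most e h more. *)
Lemma padded_count_le s L m B e h : 0 < h -> s <= m + B -> L <= B + e ->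
  s - L + L * h <= m + B * h + e * h.
Proof.
case: h => // h _ s_le L_le.
have : L * h <= (B + e) * h by rewrite leq_mul2r L_le orbT.
lia.
Qed.

Section LowerBound.
Variables a d r h n : nat.
Hypotheses (a_gt0 : 0 < a) (h_gt0 : 0 < h) (r_gt0 : 0 < r) (cad : coprime a d).
Hypothesis d_large : h * n * (r - 1) < d.

Lemma gen_comb_digit_min t s m (b : nat -> nat) :
  t < a -> s <= m + \sum_(i < n.+1) b i -> gen_comb a d r h n m b = t * d %[mod a] ->
  gen_comb a d r h n (s - radic_digit_sum r n t) (digit r n t)
    <= gen_comb a d r h n m b.
Proof.
move=> t_lt_a s_le; rewrite !gen_combE digit_sumE digit_valueE //.
set L := radic_digit_sum r n t; set B := \sum_(i < n.+1) b i.
set T := \sum_(i < n.+1) b i * r ^ i; move=> comb_mod.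
have T_mod : T %% a = t.
  rewrite -(modn_small t_lt_a); apply: (eqn_modMr_coprime cad).
  by rewrite -comb_mod modnMDl.
case: (ltnP T a) => [T_lt_a | a_le_T].
  have T_t : T = t by rewrite -T_mod modn_small.
  have L_le_B : L <= B by rewrite /L -T_t radic_digit_sum_min.
  rewrite T_t leq_add2r leq_mul2r; apply/orP; right.
  by rewrite -[m + _]addn0 -(mul0n h) padded_count_le // addn0.
have t_le_T : t <= T by rewrite -T_mod leq_mod.
have T_le : T <= B * r ^ n.
  rewrite /T /B big_distrl; apply: leq_sum => i _.
  by apply: leq_mul => //; apply: leq_pexp2l; rewrite // -ltnS.
have q_le_B : t %/ r ^ n <= B.
  by rewrite -(@mulnK B (r ^ n)) ?expn_gt0 ?r_gt0 // leq_div2r // (leq_trans t_le_T).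
have L_le : L <= B + n * (r - 1).
  by apply: leq_trans (radic_digit_sum_le r_gt0 n t) _; rewrite addnC leq_add2r.
have T_ge : (a + t) * d <= T * d.
  rewrite leq_mul2r (divn_eq T a) T_mod leq_add2r; apply/orP; right.
  by rewrite -{1}[a]mul1n leq_mul2r divn_gt0 // a_le_T orbT.
have count : s - L + L * h <= m + B * h + d.
  apply: leq_trans (padded_count_le h_gt0 s_le L_le) _.
  by rewrite leq_add2l mulnC mulnA; apply: ltnW.
have : (s - L + L * h) * a <= (m + B * h + d) * a by rewrite leq_mul2r count orbT.
lia.
Qed.

End LowerBound.

Section Semigroup.
Variables a d r h n : nat.
Hypotheses (a_gt0 : 0 < a) (h_gt0 : 0 < h).
Local Notation g := (gen a d r h n).
Local Notation comb := (gen_comb a d r h n).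

Lemma inS_gen_comb m (b : nat -> nat) : inS g (comb m b).
Proof. by have [c [<- _]] := coeffs_of_gen_comb a d r h n m b; exists c. Qed.

Lemma inS_gen_combP x : inS g x -> exists m (b : nat -> nat), x = comb m b.
Proof.
by move=> [c ->]; have [m [b [-> _]]] := gen_comb_of_coeffs a d r h c; exists m, b.
Qed.

Lemma in_sM_gen_comb s m (b : nat -> nat) :
  0 < s <= m + \sum_(i < n.+1) b i -> in_sM g s (comb m b).
Proof.
have [c [<- <-]] := coeffs_of_gen_comb a d r h n m b.
by apply: in_sM_le; apply: in_sM_comb => k; apply: gen_gt0.
Qed.

Lemma in_sM_gen_combP s x : in_sM g s x ->
  exists m (b : nat -> nat), x = comb m b /\ s <= m + \sum_(i < n.+1) b i.
Proof.
move=> /in_sM_count [c [-> s_le]].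
have [m [b [-> count]]] := gen_comb_of_coeffs a d r h c.
by exists m, b; rewrite -count.
Qed.

End Semigroup.

Lemma gen_comb_digit_mod a d r h n m t : 0 < r ->
  gen_comb a d r h n m (digit r n t) = t * d %[mod a].
Proof. by move=> r_gt0; rewrite gen_combE digit_valueE // modnMDl. Qed.

Lemma ell_radic_digit_sum r n t : ell r n t = radic_digit_sum r n t.
Proof.
rewrite /ell; case: eqP => // ->.
by rewrite /radic_digit_sum div0n addn0 big1 // => k _; rewrite div0n mod0n.
Qed.

Lemma omega_valueE a d r h n s t : 0 < r ->
  (if s <= ell r n t then ell r n t * h * a + t * d
   else ell r n t * h * a + t * d + (s - ell r n t) * a)
  = gen_comb a d r h n (s - ell r n t) (digit r n t).
Proof.
move=> r_gt0; rewrite gen_combE digit_sumE digit_valueE // -ell_radic_digit_sum.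
by case: leqP => [/eqP-> | _]; rewrite ?add0n ?mul0n; lia.
Qed.

Theorem theorem7p5 (a d r h n : nat) :
  0 < a -> 0 < d -> 0 < h -> 0 < n -> 2 <= r ->
  coprime a d -> coprime a r ->
  h * n * (r - 1) < d ->
  minimally_generating (gen a d r h n) ->
  forall t s, t <= a - 1 -> s <= Lmax a r n ->
    is_omega (gen a d r h n) a d s t
      (if s <= ell r n t then ell r n t * h * a + t * d
       else ell r n t * h * a + t * d + (s - ell r n t) * a).
Proof.
move=> a_gt0 _ h_gt0 _ r_ge2 cad _ d_large _ t s t_le _.
have t_lt_a : t < a by lia.
have r_gt0 : 0 < r by apply: leq_trans r_ge2.
rewrite omega_valueE // ell_radic_digit_sum.
have v_mod m := gen_comb_digit_mod a d h n m t r_gt0.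
have v_min := gen_comb_digit_min a_gt0 h_gt0 r_gt0 cad d_large t_lt_a.
rewrite /is_omega; case: eqP => [-> | /eqP s_neq0].
  set v := gen_comb _ _ _ _ _ _ _.
  split; last exact: v_mod.
  split=> [|[a_le /inS_gen_combP[m [b comb_eq]]]]; first exact: inS_gen_comb.
  have v_shift : v - a = v %[mod a] by rewrite -{2}(subnK a_le) modnDr.
  have : v <= gen_comb a d r h n m b by rewrite v_min // -comb_eq v_shift /v v_mod.
  by rewrite -comb_eq; lia.
split=> // [|w /in_sM_gen_combP[m [b [-> s_le]]] w_mod]; last exact: v_min.
apply: in_sM_gen_comb => //; rewrite digit_sumE lt0n s_neq0 /=; lia.
Qed.
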